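(* For every positive integer $n$ there exists a prime labeled oriented tree $\Gamma$ of Coxeter type with $n$ vertices such that the group $G(\Gamma)$ has rank $n$ (i.e. cannot be generated by fewer than $n$ elements). In particular, if $n\ge 3$ then $G(\Gamma)$ is not a one-relator group.
   Context: A labeled oriented tree (LOT) $\Gamma$ is a finite tree with vertex set $\mathbf{x}$ whose edges are oriented and each edge is labeled by a (possibly empty) word $w$ in $\mathbf{x}^{\pm1}$; for the edge $e=(x\xrightarrow{w}y)$ from $x$ to $y$ labeled $w$, set $r_e=xw(wy)^{-1}$; $G(\Gamma)=\langle\mathbf{x}\mid r_e,\ e\text{ an edge}\rangle$. $\Gamma$ is of Coxeter type if for every edge $e=(x\xrightarrow{w}y)$ every letter $z\ne x,y$ occurs in $w$ only with even exponents. A subLOT of $\Gamma$ is a subtree $\Gamma'$ such that all letters in the labels of edges of $\Gamma'$ are vertices of $\Gamma'$; $\Gamma$ is prime if it has no subLOT other than $\Gamma$ itself and single vertices. A one-relator group is a group admitting a presentation with a single relator. *)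

From mathcomp Require Import all_boot.
Set Implicit Arguments. Unset Strict Implicit. Unset Printing Implicit Defensive.

(* A word in X^{+-1}: a letter (x, true) is x, (x, false) is x^{-1}. *)
Definition word (X : Type) := seq (X * bool).

Definition letter_inv (X : Type) (a : X * bool) : X * bool := (a.1, ~~ a.2).

Definition winv (X : Type) (w : word X) : word X := rev (map (@letter_inv X) w).

Definition subst (X Y : Type) (f : X -> word Y) (u : word X) : word Y :=
  flatten (map (fun a => if a.2 then f a.1 else winv (f a.1)) u).

(* equality in the group < X | R >: the congruence on words generated by
   free cancellation and insertion/deletion of relators. *)
Inductive weq (X : Type) (R : word X -> Prop) : word X -> word X -> Prop :=
| weq_refl w : weq R w w
| weq_sym u v : weq R u v -> weq R v u
| weq_trans u v t : weq R u v -> weq R v t -> weq R u t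
| weq_free u a v : weq R (u ++ a :: letter_inv a :: v) (u ++ v)
| weq_rel u r v : R r -> weq R (u ++ r ++ v) (u ++ v).

Definition generated_by (X : Type) (R : word X -> Prop) (k : nat) : Prop :=
  exists g : 'I_k -> word X, forall w : word X,
    exists u : word 'I_k, weq R w (subst g u).

Definition has_rank (X : Type) (R : word X -> Prop) (n : nat) : Prop :=
  generated_by R n /\ forall k, k < n -> ~ generated_by R k.

Definition pres_hom (X Y : Type) (RX : word X -> Prop) (RY : word Y -> Prop)
  (f : X -> word Y) : Prop :=
  forall r, RX r -> weq RY (subst f r) [::].

Definition pres_iso (X Y : Type) (RX : word X -> Prop) (RY : word Y -> Prop) : Prop :=
  exists (f : X -> word Y) (g : Y -> word X),
    [/\ pres_hom RX RY f, pres_hom RY RX g,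
        (forall x, weq RX (subst g (f x)) [:: (x, true)]) &
        (forall y, weq RY (subst f (g y)) [:: (y, true)])].

Definition one_relator (X : Type) (R : word X -> Prop) : Prop :=
  exists (Y : Type) (r : word Y), pres_iso (fun w => w = r) R.

Definition edge (n : nat) := ('I_n * 'I_n * word 'I_n)%type.
Definition e_src n (e : edge n) : 'I_n := e.1.1.
Definition e_tgt n (e : edge n) : 'I_n := e.1.2.
Definition e_lab n (e : edge n) : word 'I_n := e.2.

Definition adj_in n (E : seq (edge n)) (S : {set 'I_n}) : rel 'I_n :=
  fun x y => [&& x \in S, y \in S &
    has (fun e => ((e_src e == x) && (e_tgt e == y)) ||
                  ((e_src e == y) && (e_tgt e == x))) E].

(* E is (the edge list of) a LOT with vertex set 'I_n: the underlying
   graph is a tree (connected with n - 1 edges). *)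
Definition is_LOT n (E : seq (edge n)) : Prop :=
  size E = n.-1 /\ forall x y : 'I_n, connect (adj_in E setT) x y.

Definition relator n (e : edge n) : word 'I_n :=
  (e_src e, true) :: e_lab e ++ (e_tgt e, false) :: winv (e_lab e).

Definition LOT_rels n (E : seq (edge n)) : word 'I_n -> Prop :=
  fun r => exists2 e, e \in E & r = relator e.

(* every letter z <> x, y occurs in the label only with even exponents:
   every maximal block of consecutive letters z^{+-1} has even length
   (equivalently, even total exponent). *)
Definition coxeter_type n (E : seq (edge n)) : Prop :=
  forall e, e \in E -> forall z : 'I_n, z != e_src e -> z != e_tgt e ->
    forall u v t : word 'I_n, e_lab e = u ++ v ++ t -> v != [::] ->
      all (fun a => a.1 == z) v ->
      omap fst (ohead (rev u)) != Some z ->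
      omap fst (ohead t) != Some z ->
      ~~ odd (size v).

Definition subLOT n (E : seq (edge n)) (S : {set 'I_n}) : Prop :=
  [/\ S != set0,
      (forall x y, x \in S -> y \in S -> connect (adj_in E S) x y) &
      (forall e, e \in E -> e_src e \in S -> e_tgt e \in S ->
         all (fun a => a.1 \in S) (e_lab e))].

Definition prime_LOT n (E : seq (edge n)) : Prop :=
  forall S : {set 'I_n}, subLOT E S -> #|S| = 1 \/ S = setT.

From HB Require Import structures.
From mathcomp Require Import all_boot all_order all_algebra zify.
From Stdlib Require Import Classical ClassicalEpsilon.
Set Implicit Arguments. Unset Strict Implicit. Unset Printing Implicit Defensive.
Import GRing.Theory.

(* Take the path 0 -> 1 -> ... -> n-1 whose edge x -> y is labelled
   z_0^2 z_1^2 ... z_(n-1)^2 x y x y.  Every label contains every vertex, so the LOT is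
   prime, and a letter other than x, y only occurs in the block z^2, so it is of Coxeter
   type.  Modulo the squares of the generators the relation x w = w y says (x y)^3 = 1, so
   sending x to the reflection v |-> e_x - v of F_3^n kills every relator.  The translation
   parts of a subgroup generated by m such affine maps span at most m dimensions, while
   the images of the generators have translation parts e_x; hence G(Gamma) has rank n.
   Every homomorphism G(Gamma) -> Q is constant on the generators since the tree is
   connected, whereas a one-relator group <Y | r> with three distinct generators has a
   nonzero homomorphism to Q killing any prescribed element (three unknowns, two linear
   equations); and |Y| <= 2 would contradict the rank. *)

Section Words.
Variable X : Type.
Implicit Types (R : word X -> Prop) (u v w : word X).

Lemma letter_invK : involutive (@letter_inv X).
Proof. by case=> x b; rewrite /letter_inv negbK. Qed.

Lemma winv_cat u v : winv (u ++ v) = winv v ++ winv u.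
Proof. by rewrite /winv map_cat rev_cat. Qed.

Lemma winv_cons a w : winv (a :: w) = winv w ++ [:: letter_inv a].
Proof. by rewrite -cat1s winv_cat. Qed.

Lemma winvK : involutive (@winv X).
Proof. by move=> w; rewrite /winv map_rev revK (mapK letter_invK). Qed.

Lemma weq_catr R u v w : weq R u v -> weq R (u ++ w) (v ++ w).
Proof.
elim=> {u v} [u|u v _|u v t _ IHuv _ IHvt|u a v|u r v Rr].
- exact: weq_refl.
- exact: weq_sym.
- exact: weq_trans IHvt.
- by rewrite -!catA; apply: weq_free.
- by rewrite -!catA; apply: weq_rel.
Qed.

Lemma weq_catl R u v w : weq R u v -> weq R (w ++ u) (w ++ v).
Proof.
elim=> {u v} [u|u v _|u v t _ IHuv _ IHvt|u a v|u r v Rr].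
- exact: weq_refl.
- exact: weq_sym.
- exact: weq_trans IHvt.
- by rewrite !catA; apply: weq_free.
- by rewrite !catA -(catA _ r); apply: weq_rel.
Qed.

Lemma weq_cat R u u' v v' :
  weq R u u' -> weq R v v' -> weq R (u ++ v) (u' ++ v').
Proof. by move=> uu' vv'; apply: weq_trans (weq_catr _ uu') (weq_catl _ vv'). Qed.

Lemma weq_cancel R w : weq R (w ++ winv w) [::].
Proof.
elim: w => [|a w IHw]; first exact: weq_refl.
rewrite winv_cons /= catA.
apply: weq_trans (weq_catl [:: a] (weq_catr [:: letter_inv a] IHw)) _.
exact: (@weq_free _ R [::] a [::]).
Qed.

Lemma weq_winv R u v : weq R u v -> weq R (winv u) (winv v).
Proof.
move=> uv; have cancel_l w : weq R (winv w ++ w) [::].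
  by rewrite -{2}(winvK w); apply: weq_cancel.
rewrite -[winv u]cats0.
apply: weq_trans (weq_catl _ (weq_sym (weq_cancel R v))) _.
apply: weq_trans (weq_catl _ (weq_catr _ (weq_sym uv))) _.
by rewrite catA; apply: weq_catr (cancel_l u).
Qed.

End Words.

Section Substitution.
Variable X : Type.
Implicit Types (u v w : word X).

Lemma subst_cons Y (f : X -> word Y) a w :
  subst f (a :: w) = (if a.2 then f a.1 else winv (f a.1)) ++ subst f w.
Proof. by []. Qed.

Lemma subst_cat Y (f : X -> word Y) u v : subst f (u ++ v) = subst f u ++ subst f v.
Proof. by rewrite /subst map_cat flatten_cat. Qed.

Lemma subst_winv Y (f : X -> word Y) w : subst f (winv w) = winv (subst f w).
Proof.
elim: w => [|[x b] w IHw] //.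
rewrite winv_cons subst_cat IHw subst_cons winv_cat.
by case: b; rewrite /subst /= ?winvK cats0.
Qed.

Lemma subst_id w : subst (fun x => [:: (x, true)]) w = w.
Proof. by elim: w => [|[x []] w IHw] //; rewrite subst_cons IHw. Qed.

Lemma weq_subst_fun Y (RY : word Y -> Prop) (f g : X -> word Y) w :
  (forall x, weq RY (f x) (g x)) -> weq RY (subst f w) (subst g w).
Proof.
move=> fg; elim: w => [|[x b] w IHw]; first exact: weq_refl.
by apply: weq_cat IHw; case: b; [apply: fg | apply/weq_winv/fg].
Qed.

Lemma weq_subst Y (RX : word X -> Prop) (RY : word Y -> Prop) (f : X -> word Y) u v :
  pres_hom RX RY f -> weq RX u v -> weq RY (subst f u) (subst f v).
Proof.
move=> fhom; elim=> {u v} [u|u v _|u v t _ IHuv _ IHvt|u [x b] v|u r v Rr].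
- exact: weq_refl.
- exact: weq_sym.
- exact: weq_trans IHvt.
- rewrite !subst_cat; apply: weq_catl; rewrite !subst_cons catA.
  rewrite -[X in weq _ _ X]cat0s; apply: weq_catr.
  case: b => /=; first exact: weq_cancel.
  by rewrite -{2}(winvK (f x)); apply: weq_cancel.
- rewrite !subst_cat; apply: weq_catl; rewrite -[X in weq _ _ X]cat0s.
  exact/weq_catr/fhom.
Qed.

End Substitution.

Lemma subst_comp X Y Z (f : X -> word Y) (g : Y -> word Z) w :
  subst g (subst f w) = subst (fun x => subst g (f x)) w.
Proof.
elim: w => [|[x b] w IHw] //.
by rewrite !subst_cons subst_cat IHw; case: b; rewrite ?subst_winv.
Qed.

Lemma generated_by_iso X Y (RX : word X -> Prop) (RY : word Y -> Prop) m :
  pres_iso RX RY -> generated_by RX m -> generated_by RY m.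
Proof.
move=> [f [g [fhom _ _ fgK]]] [gen genP].
exists (fun i => subst f (gen i)) => w; have [u gu] := genP (subst g w).
exists u; rewrite -(subst_comp gen f).
apply: weq_trans (weq_subst fhom gu); rewrite subst_comp.
by apply: weq_sym; rewrite -{2}(subst_id w); apply: weq_subst_fun.
Qed.

Lemma generated_by_surj X (R : word X -> Prop) m (e : 'I_m -> X) :
  (forall x, exists i, e i = x) -> generated_by R m.
Proof.
move=> e_surj; pose s x := proj1_sig (constructive_indefinite_description _ (e_surj x)).
have sK : cancel s e by move=> x; rewrite /s; case: constructive_indefinite_description.
exists (fun i => [:: (e i, true)]) => w; exists [seq (s a.1, a.2) | a <- w].
suff -> : subst (fun i => [:: (e i, true)]) [seq (s a.1, a.2) | a <- w] = w.
  exact: weq_refl.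
by elim: w => [|[x []] w IHw] //; rewrite subst_cons /= IHw sK.
Qed.

Section GroupEvaluation.
Local Open Scope group_scope.
Variables (X : Type) (G : groupType) (f : X -> G).
Implicit Types (u v w : word X).

Definition weval w : G := \prod_(a <- w) (if a.2 then f a.1 else (f a.1)^-1).

Lemma weval_cons a w : weval (a :: w) = (if a.2 then f a.1 else (f a.1)^-1) * weval w.
Proof. by rewrite /weval big_cons. Qed.

Lemma weval_letter x : weval [:: (x, true)] = f x.
Proof. by rewrite /weval big_seq1. Qed.

Lemma weval_cat u v : weval (u ++ v) = weval u * weval v.
Proof. by rewrite /weval big_cat. Qed.

Lemma weval_winv w : weval (winv w) = (weval w)^-1.
Proof.
elim: w => [|[x b] w IHw]; first by rewrite /weval !big_nil invg1.
rewrite winv_cons weval_cat IHw [in RHS]weval_cons invgM /weval big_seq1 /=.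
by case: b; rewrite /= ?invgK.
Qed.

Lemma weval_weq (R : word X -> Prop) u v :
  (forall r, R r -> weval r = 1) -> weq R u v -> weval u = weval v.
Proof.
move=> Rtriv; elim=> {u v} [u|u v _ ->|u v t _ -> _ ->|u [x b] v|u r v Rr] //.
  rewrite !weval_cat; congr (_ * _); rewrite !weval_cons.
  by case: b; rewrite /= ?mulKg ?mulVKg.
by rewrite !weval_cat (Rtriv r Rr) mul1g.
Qed.

Lemma weval_group_closed (S : {pred G}) w :
  group_closed S -> (forall x, f x \in S) -> weval w \in S.
Proof.
move=> Sgroup fS; have [S1 _] := Sgroup.
elim: w => [|[x b] w IHw]; first by rewrite /weval big_nil.
rewrite weval_cons (group_closedM Sgroup) //.
by case: b; rewrite /= ?(group_closedV Sgroup).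
Qed.

End GroupEvaluation.

Lemma weval_subst X Y (G : groupType) (f : X -> G) (h : Y -> word X) (u : word Y) :
  weval f (subst h u) = weval (fun y => weval f (h y)) u.
Proof.
elim: u => [|[y b] u IHu]; first by rewrite /weval !big_nil.
by rewrite subst_cons weval_cat IHu weval_cons; case: b; rewrite /= ?weval_winv.
Qed.

Section Dihedral.
Variable V : zmodType.

(* (v, b) encodes the affine map x |-> v + (-1)^b x of V. *)
Definition dih : Type := (V * bool)%type.
HB.instance Definition _ := Choice.on dih.

Local Open Scope ring_scope.

Definition dih_mul (p q : dih) : dih :=
  (p.1 + (if p.2 then - q.1 else q.1), p.2 (+) q.2).
Definition dih_inv (p : dih) : dih := (if p.2 then p.1 else - p.1, p.2).
Definition dih_one : dih := (0, false).

Lemma dih_mulA : associative dih_mul.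
Proof. by move=> [u []] [v []] [w c]; rewrite /dih_mul /= ?opprD ?opprK ?addrA ?negbK. Qed.

Lemma dih_mul1g : left_id dih_one dih_mul.
Proof. by move=> [u b]; rewrite /dih_mul /= add0r. Qed.

Lemma dih_mulg1 : right_id dih_one dih_mul.
Proof. by move=> [u []]; rewrite /dih_mul /= ?oppr0 addr0 ?addbF. Qed.

Lemma dih_mulVg : left_inverse dih_one dih_inv dih_mul.
Proof. by move=> [u []]; rewrite /dih_mul /= ?addrN ?addNr ?addbb. Qed.

Lemma dih_mulgV : right_inverse dih_one dih_inv dih_mul.
Proof. by move=> [u []]; rewrite /dih_mul /= ?addrN ?opprK ?addNr ?addbb. Qed.

HB.instance Definition _ :=
  isGroup.Build dih dih_mulA dih_mul1g dih_mulg1 dih_mulVg dih_mulgV.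

Lemma dihM (p q : dih) : (p * q)%g = dih_mul p q. Proof. by []. Qed.
Lemma dih1 : 1%g = dih_one. Proof. by []. Qed.

Definition refl (v : V) : dih := (v, true).

Lemma reflK v : (refl v * refl v)%g = 1%g.
Proof. by rewrite dihM dih1 /dih_mul /= addrN. Qed.

Lemma refl_mul_expg3 u v :
  (forall x : V, x *+ 3 = 0) -> ((refl u * refl v) ^+ 3)%g = 1%g.
Proof.
move=> V3; rewrite expgSS expg2 !dihM dih1 /dih_mul /dih_one /=.
by rewrite -(V3 (u - v)) !mulrS mulr0n addr0 !addrA.
Qed.

End Dihedral.

Section DihedralRank.
Variables (F : fieldType) (n : nat).
Local Open Scope ring_scope.
Local Notation dihF := (dih 'rV[F]_n).

Lemma dih_span_group_closed m (D : 'M[F]_(m, n)) :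
  group_closed [pred p : dihF | (p.1 <= D)%MS].
Proof.
split=> [|p q]; rewrite !inE ?sub0mx //= => pD qD.
apply: addmx_sub pD _.
by case: (p.2); case: (q.2); rewrite ?opprK ?eqmx_opp.
Qed.

Definition coord_refl (x : 'I_n) : dihF := refl (delta_mx 0 x).

Lemma dih_rank_le (R : word 'I_n -> Prop) m :
  (forall r, R r -> weval coord_refl r = 1%g) -> generated_by R m -> (n <= m)%N.
Proof.
move=> Rtriv [gen genP].
pose D := \matrix_(i < m) (weval coord_refl (gen i)).1.
suff /mxrankS : (1%:M <= D)%MS by rewrite mxrank1 => /leq_trans; apply; apply: rank_leq_row.
apply/row_subP => x; rewrite row1.
have [u xu] := genP [:: (x, true)].
have -> : delta_mx 0 x = (coord_refl x).1 by [].
rewrite -(weval_letter coord_refl) (weval_weq Rtriv xu) weval_subst.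
apply: (weval_group_closed _ (dih_span_group_closed D)) => i.
by rewrite inE; apply/submxP; exists (delta_mx 0 i); rewrite -rowE rowK.
Qed.

End DihedralRank.

Section ExponentSums.
Local Open Scope ring_scope.
Variable X : Type.
Implicit Types (phi : X -> rat) (u v w : word X).

(* [exp_sum phi] is the homomorphism from the free group on X to Q extending phi;
   [rat_hom R phi] says that it factors through < X | R >. *)
Definition exp_sum phi w : rat := \sum_(a <- w) (if a.2 then phi a.1 else - phi a.1).

Definition rat_hom (R : word X -> Prop) phi := forall r, R r -> exp_sum phi r = 0.

Lemma exp_sum_nil phi : exp_sum phi [::] = 0.
Proof. by rewrite /exp_sum big_nil. Qed.

Lemma exp_sum_cons phi a w :
  exp_sum phi (a :: w) = (if a.2 then phi a.1 else - phi a.1) + exp_sum phi w.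
Proof. by rewrite /exp_sum big_cons. Qed.

Lemma exp_sum_cat phi u v : exp_sum phi (u ++ v) = exp_sum phi u + exp_sum phi v.
Proof. by rewrite /exp_sum big_cat. Qed.

Lemma exp_sum_letter phi x : exp_sum phi [:: (x, true)] = phi x.
Proof. by rewrite /exp_sum big_seq1. Qed.

Lemma exp_sum_winv phi w : exp_sum phi (winv w) = - exp_sum phi w.
Proof.
elim: w => [|[x b] w IHw]; first by rewrite exp_sum_nil oppr0.
rewrite winv_cons exp_sum_cat IHw !exp_sum_cons exp_sum_nil addr0 opprD addrC.
by case: b; rewrite /= ?opprK.
Qed.

Lemma exp_sum_weq (R : word X -> Prop) phi u v :
  rat_hom R phi -> weq R u v -> exp_sum phi u = exp_sum phi v.
Proof.
move=> phiR; elim=> {u v} [u|u v _ ->|u v t _ -> _ ->|u [x b] v|u r v Rr] //.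
  rewrite !exp_sum_cat; congr (_ + _); rewrite !exp_sum_cons addrA.
  by case: b; rewrite /= ?addrN ?addNr add0r.
by rewrite !exp_sum_cat (phiR r Rr) add0r.
Qed.

Lemma exp_sum_eq0 phi w : (forall x, phi x = 0) -> exp_sum phi w = 0.
Proof. by move=> phi0; rewrite /exp_sum big1 // => [[x []]] _; rewrite /= phi0 ?oppr0. Qed.

Lemma exp_sum_sum (I : finType) (c : I -> rat) (phis : I -> X -> rat) w :
  exp_sum (fun x => \sum_i c i * phis i x) w = \sum_i c i * exp_sum (phis i) w.
Proof.
rewrite /exp_sum; under [RHS]eq_bigr do rewrite mulr_sumr.
rewrite [RHS]exchange_big; apply: eq_bigr => [[x []]] _ //=.
by rewrite -sumrN; apply: eq_bigr => i _; rewrite mulrN.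
Qed.

End ExponentSums.

Section RationalHomomorphisms.
Local Open Scope ring_scope.

Lemma exp_sum_subst X Y (phi : Y -> rat) (h : X -> word Y) (u : word X) :
  exp_sum phi (subst h u) = exp_sum (fun x => exp_sum phi (h x)) u.
Proof.
elim: u => [|[x b] u IHu]; first by rewrite !exp_sum_nil.
by rewrite subst_cons exp_sum_cat IHu exp_sum_cons; case: b; rewrite /= ?exp_sum_winv.
Qed.

Lemma rat_hom_subst X Y (RX : word X -> Prop) (RY : word Y -> Prop)
    (h : X -> word Y) (phi : Y -> rat) :
  pres_hom RX RY h -> rat_hom RY phi -> rat_hom RX (fun x => exp_sum phi (h x)).
Proof.
move=> hhom phiR r Rr.
by rewrite -exp_sum_subst (exp_sum_weq phiR (hhom r Rr)) exp_sum_nil.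
Qed.

Lemma exp_sum_relator n (phi : 'I_n -> rat) (e : edge n) :
  exp_sum phi (relator e) = phi (e_src e) - phi (e_tgt e).
Proof.
rewrite /relator exp_sum_cons exp_sum_cat exp_sum_cons exp_sum_winv /=.
by rewrite [exp_sum _ _ + _]addrCA addrN addr0.
Qed.

Lemma rat_hom_LOT_const n (E : seq (edge n)) (phi : 'I_n -> rat) :
  (forall x y, connect (adj_in E setT) x y) -> rat_hom (LOT_rels E) phi ->
  forall x y, phi x = phi y.
Proof.
move=> Econn phiR x y; have /connectP [p pP ->] := Econn x y.
elim: p x pP => [|z p IHp] x //= /andP [/and3P [_ _ /hasP [e Ee xz]] /IHp <-].
have : exp_sum phi (relator e) = 0 by apply: phiR; exists e.
rewrite exp_sum_relator => /eqP; rewrite subr_eq0 => /eqP.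
by case/orP: xz => /andP [/eqP <- /eqP <-].
Qed.

Lemma exists_rat_kernel Y k m (ys : 'I_k -> Y) (ws : 'I_m -> word Y) :
  injective ys -> (m < k)%N ->
  exists phi : Y -> rat,
    (exists i, phi (ys i) != 0) /\ forall j, exp_sum phi (ws j) = 0.
Proof.
move=> ys_inj mk.
pose delta i y : rat := if excluded_middle_informative (y = ys i) then 1 else 0.
pose A := \matrix_(i < k, j < m) exp_sum (delta i) (ws j).
have kerA : kermx A != 0.
  by rewrite -mxrank_eq0 mxrank_ker; have := rank_leq_col A; lia.
have [p /sub_kermxP pA p0] := rowV0Pn kerA.
exists (fun y => \sum_i p 0 i * delta i y); split=> [|j].
  have [i pi0] : exists i, p 0 i != 0.
    apply/existsP; apply: contraNT p0 => /existsPn p_eq0.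
    by apply/eqP/rowP => i; rewrite mxE; apply/eqP/negPn/p_eq0.
  have delta_ys i' : delta i' (ys i) = (i == i')%:R.
    rewrite /delta; case: excluded_middle_informative => [yy|yy] /=.
      by rewrite (ys_inj _ _ yy) eqxx.
    by case: eqP => // ii'; case: yy; rewrite ii'.
  exists i; rewrite (bigD1 i) //= big1 => [|i' i'i]; rewrite delta_ys.
    by rewrite eqxx mulr1 addr0.
  by rewrite eq_sym (negbTE i'i) mulr0.
transitivity ((p *m A) 0 j); last by rewrite pA mxE.
by rewrite exp_sum_sum mxE; apply: eq_bigr => i _; rewrite mxE.
Qed.

End RationalHomomorphisms.

Lemma three_distinct_or_surj_le2 (Y : Type) :
  (exists ys : 'I_3 -> Y, injective ys) \/
  exists m, m <= 2 /\ exists e : 'I_m -> Y, forall y, exists i, e i = y.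
Proof.
case: (classic (exists y1 y2 y3 : Y, [/\ y1 <> y2, y1 <> y3 & y2 <> y3])).
  move=> [y1 [y2 [y3 [y12 y13 y23]]]]; left.
  exists (fun i : 'I_3 => match val i with 0 => y1 | 1 => y2 | _ => y3 end).
  move=> [[|[|[|i]]] ?] [[|[|[|j]]] ?] //= yij; try exact: val_inj;
    by [case: y12 | case: y13 | case: y23].
move=> no3; right.
case: (classic (exists y : Y, True)) => [[y1 _]|Y0]; last first.
  have e0 : 'I_0 -> Y by case.
  by exists 0; split=> //; exists e0 => y; case: Y0; exists y.
case: (classic (exists y2, y2 <> y1)) => [[y2 y21]|only_y1]; last first.
  exists 1; split=> //; exists (fun=> y1) => y; exists ord0.
  by apply: NNPP => y1y; apply: only_y1; exists y => /esym.
exists 2; split=> //; exists (fun i : 'I_2 => if val i == 0 then y1 else y2) => y.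
case: (classic (y = y1)) => [->|yy1]; first by exists ord0.
case: (classic (y = y2)) => [->|yy2]; first by exists ord_max.
by case: no3; exists y1, y2, y; split=> // /esym.
Qed.

Lemma not_one_relator X (R : word X -> Prop) (x0 : X) :
  (forall m, (m <= 2)%N -> ~ generated_by R m) ->
  (forall phi, rat_hom R phi -> forall x y, phi x = phi y) ->
  ~ one_relator R.
Proof.
move=> R_rank R_hom [Y [r Y_iso]].
have [[ys ys_inj]|[m [m2 [e e_surj]]]] := three_distinct_or_surj_le2 Y; last first.
  exact/(R_rank m m2)/(generated_by_iso Y_iso)/generated_by_surj/e_surj.
(* A nonzero character of < Y | r > killing g x0 pulls back to a character of < X | R >
   killing x0, which therefore vanishes. *)
have [f [g [_ ghom gfK _]]] := Y_iso.
pose ws (j : 'I_2) := if j == ord0 then r else g x0.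
have [phi [[i /eqP phi_i] phi_ws]] := exists_rat_kernel ws ys_inj (isT : 2 < 3).
have phi_hom : rat_hom (fun w => w = r) phi by move=> _ ->; apply: (phi_ws ord0).
have psi0 x : exp_sum phi (g x) = 0%R.
  by rewrite (R_hom _ (rat_hom_subst ghom phi_hom) x x0); apply: (phi_ws ord_max).
apply: phi_i; rewrite -exp_sum_letter -(exp_sum_weq phi_hom (gfK (ys i))).
by rewrite exp_sum_subst exp_sum_eq0.
Qed.

Lemma maximal_run_size (T : Type) (P : pred T) (d : T) (p b q u v t : seq T) :
  ~~ P d -> all (predC P) p -> all P b -> all (predC P) q ->
  u ++ v ++ t = p ++ b ++ q -> (0 < size v)%N -> all P v ->
  ~~ P (last d u) -> ~~ P (head d t) -> size v = size b.
Proof.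
move=> Pd /all_nthP-pP /all_nthP-bP /all_nthP-qP s_eq v_gt0 /all_nthP-vP Pu Pt.
have Ps i : P (nth d (u ++ v ++ t) i) = (size p <= i < size p + size b)%N.
  rewrite s_eq !nth_cat; case: ltnP => ip; first by rewrite (negbTE (pP d i ip)); lia.
  case: ltnP => ib; first by rewrite (bP d _ ib); lia.
  case: (ltnP (i - size p - size b) (size q)) => iq; first by rewrite (negbTE (qP d _ iq)); lia.
  by rewrite nth_default // (negbTE Pd); lia.
have := Ps (size u); rewrite nth_cat ltnn subnn nth_cat v_gt0 vP // => /esym first_v.
have := Ps (size u + (size v).-1).
rewrite nth_cat ltnNge leq_addr addKn nth_cat ltn_predL v_gt0 vP ?ltn_predL // => /esym last_v.
have := Ps (size u + size v).
rewrite nth_cat ltnNge leq_addr addKn nth_cat ltnn subnn nth0 (negbTE Pt) => /esym after_v.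
have before_v : (0 < size u)%N -> ~~ (size p <= (size u).-1 < size p + size b)%N.
  by move=> u_gt0; rewrite -Ps nth_cat ltn_predL u_gt0 nth_last.
lia.
Qed.

Lemma adj_in_sym n (E : seq (edge n)) S : symmetric (adj_in E S).
Proof.
move=> x y; rewrite /adj_in andbCA; congr [&& _, _ & _].
by apply: eq_has => e; rewrite orbC.
Qed.

Section PathLOT.
Variable k : nat.
Local Notation n := k.+1.
Local Notation V := 'I_n.

Definition squares (l : seq V) : word V := flatten [seq [:: (z, true); (z, true)] | z <- l].

Definition path_label (x y : V) : word V :=
  squares (enum V) ++ [:: (x, true); (y, true); (x, true); (y, true)].

Definition path_edge (i : nat) : edge n :=
  (inord i, inord i.+1, path_label (inord i) (inord i.+1)).

Definition path_LOT : seq (edge n) := [seq path_edge i | i <- iota 0 k].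

Lemma path_LOTP e : e \in path_LOT -> exists2 i, i < k & e = path_edge i.
Proof. by case/mapP => i; rewrite mem_iota => /andP [_ ik] ->; exists i. Qed.

Lemma path_LOT_connected x y : connect (adj_in path_LOT setT) x y.
Proof.
have from0 i : i <= k -> connect (adj_in path_LOT setT) ord0 (inord i).
  elim: i => [|i IHi] ik.
    by rewrite (_ : inord 0 = ord0) //; apply: val_inj; rewrite /= inordK.
  apply: connect_trans (IHi (ltnW ik)) (connect1 _); rewrite /adj_in !inE /=.
  by apply/hasP; exists (path_edge i); rewrite ?map_f ?mem_iota //= !eqxx.
apply: (@connect_trans _ _ ord0).
  by rewrite (sym_connect_sym (adj_in_sym _ _)) -(inord_val x) from0 // -ltnS.
by rewrite -(inord_val y) from0 // -ltnS.
Qed.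

Lemma path_LOT_is_LOT : is_LOT path_LOT.
Proof. by split; [rewrite size_map size_iota | apply: path_LOT_connected]. Qed.

Lemma mem_path_label x y z : (z, true) \in path_label x y.
Proof.
rewrite mem_cat; apply/orP; left; apply/flatten_mapP.
by exists z; rewrite ?mem_enum ?mem_head.
Qed.

Lemma path_LOT_prime : prime_LOT path_LOT.
Proof.
move=> S [S0 S_conn S_lab].
have [/card_gt1P [x [y [Sx Sy xy]]]|S_le1] := ltnP 1 #|S|; last first.
  by left; apply/eqP; rewrite eqn_leq S_le1 card_gt0.
right; have /connectP [[|x' p] /= xp y_def] := S_conn x y Sx Sy.
  by rewrite y_def eqxx in xy.
move: xp; rewrite {1}/adj_in => /andP [/and3P [_ Sx' /hasP [e Ee e_xx']] _].
have [Ssrc Stgt] : e_src e \in S /\ e_tgt e \in S.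
  by case/orP: e_xx' => /andP [/eqP -> /eqP ->].
have := S_lab e Ee Ssrc Stgt; have [i _ ->] := path_LOTP Ee => /allP S_all.
by apply/setP => z; rewrite inE (S_all (z, true)) ?mem_path_label.
Qed.

Lemma path_LOT_coxeter : coxeter_type path_LOT.
Proof.
move=> e Ee z zx zy u v t lab_e v0 vz uz tz; have [i _ e_def] := path_LOTP Ee.
move: zx zy lab_e; rewrite e_def /e_src /e_tgt /e_lab /=.
set x := inord i; set y := inord i.+1 => zx zy lab_e.
pose P (a : V * bool) := a.1 == z.
have xz : ~~ P (x, true) by rewrite /P eq_sym.
have [pre [post enum_z]] : exists pre post, enum V = pre ++ z :: post.
  have : z \in enum V by rewrite mem_enum.
  by case/splitPr => pre post; exists pre, post.
have := enum_uniq V; rewrite enum_z cat_uniq /= => /and3P [_ /norP [z_pre _] /andP [z_post _]].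
have squares_free l : z \notin l -> all (predC P) (squares l).
  move=> zl; apply/allP => a /flatten_mapP [w wl]; rewrite !inE /P => /orP [] /eqP -> /=;
  by apply: contraNneq zl => <-.
have last_u : ~~ P (last (x, true) u).
  case/lastP: (u) uz => [|u' a] //; rewrite rev_rcons last_rcons /= => uz.
  by apply: contraNN uz => /eqP ->.
have head_t : ~~ P (head (x, true) t).
  by case: (t) tz => [|a t'] //= tz; apply: contraNN tz => /eqP ->.
rewrite (@maximal_run_size _ P (x, true) (squares pre) [:: (z, true); (z, true)]
  (squares post ++ [:: (x, true); (y, true); (x, true); (y, true)]) u v t) ?squares_free //.
- by rewrite /P /= eqxx.
- by rewrite all_cat squares_free //= /P !(eq_sym _ z) zx zy.
- by rewrite -lab_e /path_label /squares enum_z map_cat flatten_cat -!catA.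
- by rewrite lt0n size_eq0.
Qed.

Section PathRelators.
Local Open Scope group_scope.
Variables (G : groupType) (f : V -> G).
Hypotheses (fK : forall x, f x * f x = 1) (f3 : forall x y, (f x * f y) ^+ 3 = 1).

Let f_inv z : (f z)^-1 = f z := mulg1_eq (fK z).

Let f_cancel a z : a * f z * f z = a.
Proof. by rewrite -{2}f_inv mulgK. Qed.

Lemma weval_squares l : weval f (squares l) = 1.
Proof.
elim: l => [|z l IHl]; first by rewrite /weval big_nil.
by rewrite /= !weval_cons IHl /= -{1}f_inv mulKg.
Qed.

Lemma weval_path_relator e : e \in path_LOT -> weval f (relator e) = 1.
Proof.
move=> /path_LOTP [i _ ->]; rewrite /relator /e_src /e_tgt /e_lab /=.
set x := inord i; set y := inord i.+1.
rewrite weval_cons weval_cat weval_cons weval_winv /path_label weval_cat weval_squares mul1g.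
rewrite !weval_cons /weval big_nil /= !mulg1 !invgM !f_inv !mulgA.
by rewrite f_cancel fK mul1g -(f3 y x) !expgSS expg1 !mulgA.
Qed.

End PathRelators.

End PathLOT.

Theorem corollary3p3 :
  forall n : nat, 0 < n ->
    exists E : seq (edge n),
      [/\ is_LOT E, prime_LOT E, coxeter_type E,
          has_rank (LOT_rels E) n &
          (3 <= n -> ~ one_relator (LOT_rels E))].
Proof.
case=> // k _; exists (path_LOT k).
have rels_triv r : LOT_rels (path_LOT k) r -> weval (@coord_refl 'F_3 k.+1) r = 1%g.
  case=> e Ee ->; apply: weval_path_relator Ee => [x|x y]; first exact: reflK.
  by apply: refl_mul_expg3 => v; rewrite -scaler_nat pchar_Fp_0 // scale0r.
have rank_le m := @dih_rank_le _ _ _ m rels_triv.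
split; [exact: path_LOT_is_LOT | exact: path_LOT_prime | exact: path_LOT_coxeter | |].
  split=> [|m lt_m /rank_le]; last by rewrite leqNgt lt_m.
  by apply: (@generated_by_surj _ _ _ id) => x; exists x.
move=> n3; apply: (not_one_relator ord0) => [m m2 /rank_le|phi /rat_hom_LOT_const]; first by lia.
by apply; apply: path_LOT_connected.
Qed.
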